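(* Let $\lambda\in[0,1]$. For every $\alpha$ with $1\le\alpha<\max\left\{\frac{\sqrt{\lambda^2-2\lambda+5}-\lambda+1}{2},\frac{2(1-\lambda)}{2\lambda+1}\right\}$, there exists an instance with the weighted single metric loss with parameter $\lambda$ in which no clustering is in the $\alpha$-core.
   Context: Instance: finite nonempty set $\mathcal{N}$ of $n$ agents, finite nonempty set $\mathcal{M}$ of feasible centers, positive integer $k$, pseudometric $d$ on $\mathcal{N}\cup\mathcal{M}$. Weighted single metric loss: $\ell_i(C,x)=\lambda\max_{j\in C}d(i,j)+(1-\lambda)d(i,x)$ for $i\in C\subseteq\mathcal{N}$, $x\in\mathcal{M}$. A clustering is $\mathcal{X}=\{(C_1,x_1),\dots,(C_k,x_k)\}$ with $C_t$ pairwise disjoint (some possibly empty), union $\mathcal{N}$, $x_t\in\mathcal{M}$; $\ell_i(\mathcal{X})=\ell_i(C_t,x_t)$ where $i\in C_t$. For $\alpha\ge1$, $\mathcal{X}$ is in the $\alpha$-core if there is no $S\subseteq\mathcal{N}$ with $|S|\ge n/k$ and $y\in\mathcal{M}$ with $\alpha\,\ell_i(S,y)<\ell_i(\mathcal{X})$ for all $i\in S$. *)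

From HB Require Import structures.
From mathcomp Require Import all_boot all_order all_algebra.
From mathcomp Require Import reals.
Set Implicit Arguments. Unset Strict Implicit. Unset Printing Implicit Defensive.
Import Order.TTheory GRing.Theory Num.Theory.
Local Open Scope ring_scope.

(* Agents N are the finite type A, feasible centers M the finite type C;
   the pseudometric lives on the disjoint union A + C (an overlapping
   N ∪ M is captured by points at distance 0). *)
Definition pt (A C : finType) := (A + C)%type.

Definition is_pseudometric (R : realType) (T : Type) (d : T -> T -> R) :=
  [/\ forall x, d x x = 0,
      forall x y, d x y = d y x &
      forall x y z, d x z <= d x y + d y z].

Definition wsm_loss (R : realType) (A C : finType) (d : pt A C -> pt A C -> R)
  (lam : R) (S : {set A}) (x : C) (i : A) : R :=
  lam * (\big[Num.max/0]_(j in S) d (inl i) (inl j)) + (1 - lam) * d (inl i) (inr x).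

(* A clustering {(C_1,x_1),...,(C_k,x_k)} is encoded by an assignment
   sigma : A -> 'I_k (C_t = sigma^-1(t), possibly empty; pairwise disjoint,
   covering A) together with centers x : 'I_k -> C. *)
Definition cluster_of (A : finType) (k : nat) (sigma : A -> 'I_k) (t : 'I_k) : {set A} :=
  [set j | sigma j == t].

Definition clustering_loss (R : realType) (A C : finType) (k : nat)
  (d : pt A C -> pt A C -> R) (lam : R) (sigma : A -> 'I_k) (x : 'I_k -> C) (i : A) : R :=
  wsm_loss d lam (cluster_of sigma (sigma i)) (x (sigma i)) i.

Definition in_alpha_core (R : realType) (A C : finType) (k : nat)
  (d : pt A C -> pt A C -> R) (lam alpha : R) (sigma : A -> 'I_k) (x : 'I_k -> C) : Prop :=
  ~ exists (S : {set A}) (y : C),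
      (#|A|%:R / k%:R <= #|S|%:R :> R) /\
      forall i, i \in S -> alpha * wsm_loss d lam S y i < clustering_loss d lam sigma x i.

From HB Require Import structures.
From mathcomp Require Import all_boot all_order all_algebra.
From mathcomp Require Import reals lra zify.
Import Order.TTheory GRing.Theory Num.Theory.
Local Open Scope ring_scope.

(* The hard instance consists of two far-apart copies ("groups") of a gadget
   with three agents and three centers on a 3-cycle: agents of a group are
   3 + lam apart, and agent i is at distance 1, 2 + lam, 4 + lam from the
   centers i, i - 1, i - 2.  There are n = 6 agents and k = 3 clusters, so any
   two agents may deviate together.  An agent whose cluster also contains a
   groupmate and whose center is at distance o pays
   cost o = lam (3 + lam) + (1 - lam) o, and
   cost 1 = (1 + lam)^2,  cost (2 + lam) = 2 (1 + lam),  cost (4 + lam) = 4,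
   so moving one step along the cycle divides the loss by 2 / (1 + lam), while
   an agent served from the other group pays at least 8 = 2 * cost (4 + lam).
   Three centers lie in two groups, so some group hosts at most one of them.
   Either two of its agents are served from outside and deviate together, or
   at least two of its agents share the cluster of the unique local center c,
   and agents c + 1, c + 2 deviate to center c + 1.  This excludes every
   alpha < 2 / (1 + lam), a bound that dominates the threshold of the theorem. *)

Section Pseudometric.
Context {R : realType} {T : Type}.
Implicit Types (d : T -> T -> R) (L : R).

Lemma pseudometric_ge0 {d : T -> T -> R} : is_pseudometric d -> forall x y, 0 <= d x y.
Proof.
case=> d0 dC dT x y; have := dT x y x; rewrite d0 (dC y x); lra.
Qed.

Lemma is_pseudometric_comp (U : Type) (f : U -> T) d :
  is_pseudometric d -> is_pseudometric (fun u v => d (f u) (f v)).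
Proof. by case=> d0 dC dT; split=> *; [apply: d0 | apply: dC | apply: dT]. Qed.

Definition glue_dist {G : eqType} (grp : T -> G) L d x y : R :=
  if grp x == grp y then d x y else L.

Lemma is_pseudometric_glue (G : eqType) (grp : T -> G) L d :
  is_pseudometric d -> (forall x y, d x y <= 2 * L) ->
  is_pseudometric (glue_dist grp L d).
Proof.
move=> dP dL; have [d0 dC dT] := dP; split; rewrite /glue_dist.
- by move=> x; rewrite eqxx.
- by move=> x y; rewrite eq_sym dC.
move=> x y z; have := pseudometric_ge0 dP x y; have := pseudometric_ge0 dP y z.
have := dL x z; have := dL x x; rewrite d0 => L0.
case: (eqVneq (grp x) (grp y)) => [exy | nxy]; case: (eqVneq (grp y) (grp z)) => [eyz | nyz].
- by rewrite exy eyz eqxx.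
- by rewrite exy (negbTE nyz); lra.
- by rewrite -eyz (negbTE nxy); lra.
- by case: eqP; lra.
Qed.

End Pseudometric.

Lemma exists_fibre_le1 {T : finType} (f : T -> bool) : (#|T| <= 3)%N ->
  exists g, forall t t', f t = g -> f t' = g -> t = t'.
Proof.
move=> T3; suff [g g1] : exists g, (#|[pred t | f t == g]| <= 1)%N.
  by exists g => t t' ft ft'; move/card_le1_eqP: g1; apply; rewrite inE ?ft ?ft'.
have := cardC [pred t | f t == true].
have -> : #|[predC [pred t | f t == true]]| = #|[pred t | f t == false]|.
  by apply: eq_card => t; rewrite !inE; case: (f t).
case: (leqP #|[pred t | f t == true]| 1) => [le1 _ | gt1 sum]; first by exists true.
by exists false; rewrite -(leq_add2l #|[pred t | f t == true]|) sum (leq_trans T3) // addn1.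
Qed.

Lemma pair_not_in_core {R : realType} {A C : finType} {k : nat}
    {d : pt A C -> pt A C -> R} {lam alpha : R} {sigma : A -> 'I_k} {x : 'I_k -> C}
    (p q : A) (y : C) :
  (#|A| <= 2 * k)%N -> p != q ->
  alpha * wsm_loss d lam [set p; q] y p < clustering_loss d lam sigma x p ->
  alpha * wsm_loss d lam [set p; q] y q < clustering_loss d lam sigma x q ->
  ~ in_alpha_core d lam alpha sigma x.
Proof.
move=> A2k pq hp hq; apply; exists [set p; q], y; split; last first.
  by move=> i /set2P[] ->.
have A0 : (0 < #|A|)%N by apply/card_gt0P; exists p.
have k0 : (0 < k)%N by lia.
rewrite cards2 pq ler_pdivrMr ?ltr0n // -natrM ler_nat; lia.
Qed.

Lemma addr_neq (V : zmodType) (m k : V) : k != 0 -> m != m + k.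
Proof. by rewrite -{1}(addr0 m) (inj_eq (addrI m)) eq_sym. Qed.

Lemma addr1_neq_addr2 (c : 'I_3) : c + 1 != c + 2.
Proof. by rewrite (inj_eq (addrI c)). Qed.

Section Gadget.
Context {R : realType}.
Implicit Types (lam : R) (i j c : 'I_3).

Definition offset_dist lam i c : R :=
  match val (i - c) with 0 => 1 | 1 => 2 + lam | _ => 4 + lam end.

Definition gadget_dist lam (p q : pt 'I_3 'I_3) : R :=
  match p, q with
  | inl i, inl j | inr i, inr j => if i == j then 0 else 3 + lam
  | inl i, inr c | inr c, inl i => offset_dist lam i c
  end.

Lemma offset_dist_shift lam c k : offset_dist lam (c + k) c = offset_dist lam k 0.
Proof. by rewrite /offset_dist (addrC c) addrK subr0. Qed.

Lemma offset_dist_id lam i : offset_dist lam i i = 1.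
Proof. by rewrite /offset_dist subrr. Qed.

Lemma offset_dist_le lam i c : 0 <= lam -> offset_dist lam i c <= 4 + lam.
Proof. by rewrite /offset_dist; case: (val _) => [|[|?]] l0; lra. Qed.

Lemma gadget_dist_le lam p q : 0 <= lam -> gadget_dist lam p q <= 4 + lam.
Proof.
move=> l0; case: p q => [i|i] [j|j] /=; try exact: offset_dist_le.
all: by case: eqP => _; lra.
Qed.

Lemma is_pseudometric_gadget lam : 0 <= lam -> is_pseudometric (gadget_dist lam).
Proof.
move=> l0; split; first by case=> i /=; rewrite eqxx.
  by case=> [i|i] [j|j] //=; rewrite eq_sym.
by case=> [[[|[|[|i]]] ?]|[[|[|[|i]]] ?]] // [[[|[|[|j]]] ?]|[[|[|[|j]]] ?]] //
   [[[|[|[|k]]] ?]|[[|[|[|k]]] ?]] //=; rewrite /offset_dist /=; lra.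
Qed.

End Gadget.

Definition agent := (bool * 'I_3)%type.

Definition pt_group (p : pt agent agent) : bool :=
  match p with inl a | inr a => a.1 end.

Definition pt_pos (p : pt agent agent) : pt 'I_3 'I_3 :=
  match p with inl a => inl a.2 | inr c => inr c.2 end.

Section HardInstance.
Context {R : realType}.
Variable lam : R.
Hypotheses (lam_ge0 : 0 <= lam) (lam_lt1 : lam < 1).

Definition far_dist : R := 8 / (1 - lam).

Definition hard_dist : pt agent agent -> pt agent agent -> R :=
  glue_dist pt_group far_dist (fun p q => gadget_dist lam (pt_pos p) (pt_pos q)).

Lemma mul_far_dist : (1 - lam) * far_dist = 8.
Proof. by rewrite /far_dist mulrC divfK // gt_eqF // subr_gt0. Qed.

Lemma far_dist_ge8 : 8 <= far_dist.
Proof. by rewrite /far_dist ler_pdivlMr ?subr_gt0 //; have := lam_ge0; lra. Qed.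

Lemma is_pseudometric_hard : is_pseudometric hard_dist.
Proof.
apply: is_pseudometric_glue.
  exact/is_pseudometric_comp/is_pseudometric_gadget.
move=> p q; have := gadget_dist_le lam (pt_pos p) (pt_pos q) lam_ge0.
have := far_dist_ge8; have := lam_lt1; lra.
Qed.

Lemma hard_dist_agents g i j :
  hard_dist (inl (g, i)) (inl (g, j)) = if i == j then 0 else 3 + lam.
Proof. by rewrite /hard_dist /glue_dist eqxx. Qed.

Lemma hard_dist_near g i c : hard_dist (inl (g, i)) (inr (g, c)) = offset_dist lam i c.
Proof. by rewrite /hard_dist /glue_dist eqxx. Qed.

Lemma hard_dist_far (a c : agent) : a.1 != c.1 -> hard_dist (inl a) (inr c) = far_dist.
Proof. by move=> /negbTE ac; rewrite /hard_dist /glue_dist /= ac. Qed.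

Definition cost (o : R) : R := lam * (3 + lam) + (1 - lam) * o.

Lemma cost_offset_le4 i c : cost (offset_dist lam i c) <= 4.
Proof.
have := offset_dist_le lam i c lam_ge0; have := lam_lt1; rewrite /cost; nra.
Qed.

Lemma wsm_loss_group_le {S : {set agent}} {g} (c i : 'I_3) :
  (forall b, b \in S -> b.1 = g) ->
  wsm_loss hard_dist lam S (g, c) (g, i) <= cost (offset_dist lam i c).
Proof.
move=> Sg; rewrite /wsm_loss hard_dist_near lerD2r ler_wpM2l // bigmax_le //.
  by have := lam_ge0; lra.
move=> [h j] /Sg /= ->; rewrite hard_dist_agents; case: eqP => _; have := lam_ge0; lra.
Qed.

Lemma clustering_loss_far_center {k} {sigma : agent -> 'I_k} {x : 'I_k -> agent}
    {a : agent} :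
  (x (sigma a)).1 != a.1 -> 8 <= clustering_loss hard_dist lam sigma x a.
Proof.
move=> far; rewrite /clustering_loss /wsm_loss hard_dist_far 1?eq_sym //.
by rewrite mul_far_dist lerDr mulr_ge0 // bigmax_ge_id.
Qed.

Lemma clustering_loss_shared {k} {sigma : agent -> 'I_k} {x : 'I_k -> agent}
    {g} {i j c : 'I_3} :
  i != j -> sigma (g, j) = sigma (g, i) -> x (sigma (g, i)) = (g, c) ->
  cost (offset_dist lam i c) <= clustering_loss hard_dist lam sigma x (g, i).
Proof.
move=> ij sj xc; rewrite /clustering_loss /wsm_loss xc hard_dist_near lerD2r ler_wpM2l //.
have -> : 3 + lam = hard_dist (inl (g, i)) (inl (g, j)).
  by rewrite hard_dist_agents (negbTE ij).
by apply: (le_bigmax_cond _ (j := (g, j))); rewrite inE sj.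
Qed.

Lemma cost_step alpha : alpha * (1 + lam) < 2 ->
  alpha * cost 1 < cost (2 + lam) /\ alpha * cost (2 + lam) < cost (4 + lam).
Proof. by move=> ha; have := lam_ge0; rewrite /cost; split; nra. Qed.

End HardInstance.

Lemma mem_pair_group (g : bool) (i j : 'I_3) b : b \in [set (g, i); (g, j)] -> b.1 = g.
Proof. by case/set2P=> ->. Qed.

Section Core.
Context {R : realType}.
Variables lam alpha : R.
Hypotheses (lam_ge0 : 0 <= lam) (lam_lt1 : lam < 1).
Hypotheses (alpha_ge0 : 0 <= alpha) (alpha_lt : alpha * (1 + lam) < 2).
Variables (sigma : agent -> 'I_3) (x : 'I_3 -> agent).

Local Notation wsm := (wsm_loss (hard_dist lam) lam).
Local Notation loss := (clustering_loss (hard_dist lam) lam sigma x).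
Local Notation in_core := (in_alpha_core (hard_dist lam) lam alpha sigma x).

Definition served_locally (a : agent) := (x (sigma a)).1 == a.1.

Lemma far_served_improves (S : {set agent}) g (c i : 'I_3) :
  (forall b, b \in S -> b.1 = g) -> ~~ served_locally (g, i) ->
  alpha * wsm S (g, c) (g, i) < loss (g, i).
Proof.
move=> Sg far.
have le4 := le_trans (wsm_loss_group_le _ lam_ge0 c i Sg)
                     (cost_offset_le4 _ lam_ge0 lam_lt1 i c).
apply: le_lt_trans (ler_wpM2l alpha_ge0 le4) _.
apply: lt_le_trans (clustering_loss_far_center _ lam_ge0 lam_lt1 far).
by have := alpha_lt; have := lam_ge0; have := alpha_ge0; nra.
Qed.

Lemma shared_improves {S : {set agent}} {g} (c y i j : 'I_3) :
  (forall b, b \in S -> b.1 = g) ->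
  i != j -> sigma (g, j) = sigma (g, i) -> x (sigma (g, i)) = (g, c) ->
  alpha * cost lam (offset_dist lam i y) < cost lam (offset_dist lam i c) ->
  alpha * wsm S (g, y) (g, i) < loss (g, i).
Proof.
move=> Sg ij sj xc improves.
apply: le_lt_trans (ler_wpM2l alpha_ge0 (wsm_loss_group_le _ lam_ge0 y i Sg)) _.
exact: lt_le_trans improves (clustering_loss_shared _ lam_ge0 ij sj xc).
Qed.

Lemma far_served_pair_not_in_core g (i j : 'I_3) :
  i != j -> ~~ served_locally (g, i) -> ~~ served_locally (g, j) -> ~ in_core.
Proof.
move=> ij ui uj; apply: (pair_not_in_core (g, i) (g, j) (g, i)).
- by rewrite card_prod card_bool card_ord.
- by apply: contra_neq ij => -[].
- exact: far_served_improves (@mem_pair_group g i j) ui.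
- exact: far_served_improves (@mem_pair_group g i j) uj.
Qed.

Lemma one_center_pair_not_in_core g t0 (c : 'I_3) :
  x t0 = (g, c) -> (forall i, served_locally (g, i) -> sigma (g, i) = t0) ->
  (forall i j, i != j -> served_locally (g, i) || served_locally (g, j)) ->
  ~ in_core.
Proof.
move=> xc in_t0 two_served.
have improves (m y : 'I_3) :
    alpha * cost lam (offset_dist lam m y) < cost lam (offset_dist lam m c) ->
    alpha * wsm [set ((g, c + 1) : agent); (g, c + 2)] (g, y) (g, m) < loss (g, m).
  move=> gain; have [sm | um] := boolP (served_locally (g, m)); last first.
    exact: far_served_improves (@mem_pair_group g _ _) um.
  have [j [mj sj]] : exists j, m != j /\ served_locally (g, j).
    by case/orP: (two_served _ _ (addr1_neq_addr2 m)) => ?;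
      [exists (m + 1) | exists (m + 2)]; rewrite addr_neq.
  by apply: (shared_improves c y m j (@mem_pair_group g _ _) mj); rewrite ?in_t0.
have [gain1 gain2] := cost_step _ lam_ge0 _ alpha_lt.
apply: (pair_not_in_core (g, c + 1) (g, c + 2) (g, c + 1)).
- by rewrite card_prod card_bool card_ord.
- by apply: contra_neq (addr1_neq_addr2 c) => /(congr1 snd).
- by apply: improves; rewrite offset_dist_id offset_dist_shift.
- apply: improves; rewrite offset_dist_shift (_ : c + 2 = c + 1 + 1) ?offset_dist_shift //.
  by rewrite -addrA.
Qed.

Lemma hard_not_in_core : ~ in_core.
Proof.
have [g center_uniq] := exists_fibre_le1 (fun t => (x t).1) (eq_leq (card_ord 3)).
case: (pickP [pred ij : 'I_3 * 'I_3 | [&& ij.1 != ij.2,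
    ~~ served_locally (g, ij.1) & ~~ served_locally (g, ij.2)]]) => [[i j] | no_pair].
  by case/and3P; apply: far_served_pair_not_in_core.
have two_served i j : i != j -> served_locally (g, i) || served_locally (g, j).
  by move=> ij; move/negbT: (no_pair (i, j)); rewrite /= ij /= negb_and !negbK.
have [a0 sa0] : exists a0, served_locally (g, a0).
  by case/orP: (two_served 0 1 isT) => ?; [exists 0 | exists 1].
set t0 := sigma (g, a0); have xt0 : (x t0).1 = g by apply/eqP.
apply: (one_center_pair_not_in_core g t0 (x t0).2 _ _ two_served).
  by rewrite -xt0 -surjective_pairing.
by move=> i /eqP si; apply: center_uniq.
Qed.

End Core.

Lemma core_threshold_le {R : realType} {lam : R} : 0 <= lam <= 1 ->
  Num.max ((Num.sqrt (lam ^+ 2 - 2 * lam + 5) - lam + 1) / 2)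
          (2 * (1 - lam) / (2 * lam + 1)) <= 2 / (1 + lam).
Proof.
move=> /andP[l0 l1]; have lam1 : 0 < 1 + lam by lra.
rewrite ge_max; apply/andP; split; last first.
  by rewrite ler_pdivrMr 1?mulrAC ?ler_pdivlMr //; [nra | lra].
set s := Num.sqrt _; have s0 : 0 <= s := sqrtr_ge0 _.
have s2 : s ^+ 2 = lam ^+ 2 - 2 * lam + 5 by rewrite sqr_sqrtr //; nra.
(* (3 + lam^2)^2 - (lam^2 - 2 lam + 5) (1 + lam)^2 = 4 (1 - lam)^2 *)
have hs : s * (1 + lam) <= 3 + lam ^+ 2.
  rewrite -ler_sqr ?nnegrE ?mulr_ge0 ?addr_ge0 ?sqr_ge0 //.
  by rewrite exprMn s2; nra.
by rewrite ler_pdivrMr // mulrAC ler_pdivlMr //; nra.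
Qed.

Theorem mainTheorem11 (R : realType) (lam : R) :
  0 <= lam <= 1 ->
  forall alpha : R,
    1 <= alpha ->
    alpha < Num.max ((Num.sqrt (lam ^+ 2 - 2 * lam + 5) - lam + 1) / 2)
                    (2 * (1 - lam) / (2 * lam + 1)) ->
    exists (A C : finType) (k : nat) (d : pt A C -> pt A C -> R),
      [/\ (0 < #|A|)%N, (0 < #|C|)%N, (0 < k)%N, is_pseudometric d &
        forall (sigma : A -> 'I_k) (x : 'I_k -> C),
          ~ in_alpha_core d lam alpha sigma x].
Proof.
move=> lam01 alpha alpha_ge1 alpha_lt_max; have /andP[lam_ge0 lam_le1] := lam01.
have alpha_lt : alpha * (1 + lam) < 2.
  rewrite -ltr_pdivlMr; last lra.
  exact: lt_le_trans alpha_lt_max (core_threshold_le lam01).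
have lam_lt1 : lam < 1 by nra.
exists agent, agent, 3%N, (hard_dist lam); split.
- by rewrite card_prod card_bool card_ord.
- by rewrite card_prod card_bool card_ord.
- by [].
- exact: is_pseudometric_hard.
- by move=> sigma x; apply: hard_not_in_core => //; lra.
Qed.
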